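(* Let $m\ge2$ be even. For integers $i\ge0$ and even $n\ge 2$ define, as functions of $(s,t)$, $$\tilde f_n^i(s,t)=-\sqrt{\tfrac{\pi}{2}}\sum_{\ell=0}^{\lfloor (i-1)/2\rfloor}s^{i-1-2\ell}\frac{1}{2^\ell\ell!}\frac{\Gamma(i+1)}{\Gamma(i-2\ell)}\widetilde J_{(n-2\ell-3)/2}(t)\quad(i\ge1),$$ $$\hat f_n^i(s,t)=(-1)^{n/2+i}\sqrt{\tfrac{\pi}{2}}\sum_{\ell=0}^{\lfloor i/2\rfloor}s^{i-2\ell}\frac{1}{2^\ell\ell!}\frac{\Gamma(i+1)}{\Gamma(i+1-2\ell)}\widetilde J_{(n-2\ell-3)/2}(t),$$ $$g_n^i(s,t)=\sqrt{\tfrac{\pi}{2}}\sum_{\ell=0}^{\lfloor i/2\rfloor}s^{i-2\ell}\frac{1}{2^\ell\ell!}\frac{\Gamma(i+1)}{\Gamma(i+1-2\ell)}\widetilde J_{(n-2\ell-1)/2}(t).$$ Then for every $i$ with $1\le i\le m-2$, $$\tilde f_{m+2}^{i+1}=\frac{i+1}{i}z^{-1}\partial_w\tilde f_m^i,\qquad \hat f_{m+2}^{i+1}=z^{-1}\partial_w\hat f_m^i,\qquad g_{m+2}^{i+1}=-\frac{1}{i+1}z^{-1}\partial_w\tilde f_{m+2}^{i+1},$$ and moreover $$\hat f_{m+2}^1=z^{-1}\partial_w\hat f_m^0,\qquad \tilde f_{m+2}^1=(-1)^{m/2-1}s^{-1}\hat f_{m+2}^1,\qquad g_{m+2}^1=-z^{-1}\partial_w\tilde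 f_{m+2}^1.$$
   Context: $\widetilde J_\alpha(t)=t^{-\alpha}J_\alpha(t)$ with $J_\alpha$ the Bessel function (for $\alpha\ge-1/2$ this is an entire even function of $t$). The variables are related by $s=zw$ and $t=z\sqrt{1-w^2}$, where (in the application) $s=\langle\underline{x},\underline{y}\rangle$, $t=|\underline{x}\wedge\underline{y}|=\sqrt{|\underline{x}|^2|\underline{y}|^2-s^2}$, $z=|\underline{x}||\underline{y}|$, $w=\langle\underline{x}/|\underline{x}|,\underline{y}/|\underline{y}|\rangle$. The operator $z^{-1}\partial_w$ means: regard a function of $(s,t)$ as a function of $(w,z)$ via these substitutions, differentiate with respect to $w$ at fixed $z$, and divide by $z$. *)

From Stdlib Require Import Reals Lra Lia ZArith List.
From Coquelicot Require Import Coquelicot.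
Open Scope R_scope.

Definition sumR (N : nat) (f : nat -> R) : R :=
  fold_right Rplus 0 (map f (seq 0 N)).

(* Euler's Gamma at half-integers:  GammaH j = Gamma(j + 1/2), j : Z,
   determined by Gamma(1/2) = sqrt pi and Gamma(x+1) = x Gamma(x)
   (half-integers are never poles). *)
Fixpoint GammaH_pos (n : nat) : R :=
  match n with
  | O => sqrt PI
  | S n' => (INR n' + /2) * GammaH_pos n'
  end.
Fixpoint GammaH_neg (n : nat) : R :=       (* Gamma(1/2 - n) *)
  match n with
  | O => sqrt PI
  | S n' => GammaH_neg n' / (/2 - INR (S n'))
  end.
Definition GammaH (j : Z) : R :=
  if (0 <=? j)%Z then GammaH_pos (Z.to_nat j) else GammaH_neg (Z.to_nat (- j)).

(* Jtil q t = t^{-alpha} J_alpha(t) with alpha = q - 1/2, given by its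
   (entire, even) power series
     sum_k (-1)^k t^{2k} / (2^{2k+alpha} k! Gamma(k+alpha+1)),
   where Gamma(k+alpha+1) = Gamma((k+q) + 1/2) = GammaH (k+q). *)
Definition Jtil (q : Z) (t : R) : R :=
  Series (fun k : nat =>
    (-1) ^ k * t ^ (2 * k)
    / (Rpower 2 (2 * INR k + IZR q - /2) * INR (fact k) * GammaH (Z.of_nat k + q))).

(* Bessel index (n - 2l - 3)/2 = q - 1/2 with q = n/2 - l - 1 (n even). *)
Definition qA (n l : nat) : Z := (Z.of_nat (Nat.div2 n) - Z.of_nat l - 1)%Z.
(* Bessel index (n - 2l - 1)/2 = q - 1/2 with q = n/2 - l (n even). *)
Definition qB (n l : nat) : Z := (Z.of_nat (Nat.div2 n) - Z.of_nat l)%Z.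

(* Gamma(i+1)/Gamma(i-2l) = i!/(i-1-2l)!  (the index l ranges over
   0 <= l <= floor((i-1)/2), i.e. l < (i+1)/2 in nat; empty for i = 0). *)
Definition ftil (n i : nat) (s t : R) : R :=
  - sqrt (PI / 2) *
  sumR (Nat.div2 (i + 1)) (fun l =>
    s ^ (i - 1 - 2 * l) * / (2 ^ l * INR (fact l))
    * (INR (fact i) / INR (fact (i - 1 - 2 * l))) * Jtil (qA n l) t).

(* l ranges over 0 <= l <= floor(i/2), i.e. l < i/2 + 1;
   Gamma(i+1)/Gamma(i+1-2l) = i!/(i-2l)!. *)
Definition fhat (n i : nat) (s t : R) : R :=
  (-1) ^ (Nat.div2 n + i) * sqrt (PI / 2) *
  sumR (S (Nat.div2 i)) (fun l =>
    s ^ (i - 2 * l) * / (2 ^ l * INR (fact l))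
    * (INR (fact i) / INR (fact (i - 2 * l))) * Jtil (qA n l) t).

Definition gfun (n i : nat) (s t : R) : R :=
  sqrt (PI / 2) *
  sumR (S (Nat.div2 i)) (fun l =>
    s ^ (i - 2 * l) * / (2 ^ l * INR (fact l))
    * (INR (fact i) / INR (fact (i - 2 * l))) * Jtil (qB n l) t).

(* A function of (s,t) seen as a function of (z,w) via
   s = z w, t = z sqrt(1 - w^2). *)
Definition polar (F : R -> R -> R) (z w : R) : R :=
  F (z * w) (z * sqrt (1 - w ^ 2)).

Definition zDw (F : R -> R -> R) (z w : R) : R :=
  / z * Derive (fun w' => polar F z w') w.

(* In the polar variables s = z w, t = z sqrt(1 - w^2) one has ds/dw = z and
   t dt/dw = -z s, while the Bessel recurrence gives d/dt Jtil_q = - t Jtil_(q+1).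
   Hence z^-1 d/dw sends s^a Jtil_q(t) to a s^(a-1) Jtil_q(t) + s^(a+1) Jtil_(q+1)(t).
   All three families are constant multiples of
     P_n^j(s,t) = sum_l j!/(2^l l! (j-2l)!) s^(j-2l) Jtil_(n/2-l-1)(t),
   and the coefficients satisfy the pairing-count recurrence
     c(j+1, l+1) = (j-2l) c(j,l) + c(j,l+1),
   which is exactly what makes z^-1 d/dw P_n^j = P_(n+2)^(j+1). *)
From Stdlib Require Import Reals Lra Lia ZArith List.
From Coquelicot Require Import Coquelicot.
Open Scope R_scope.

Lemma GammaH_pos_gt0 n : 0 < GammaH_pos n.
Proof.
  induction n as [|n IH]; simpl.
  - apply sqrt_lt_R0, PI_RGT_0.
  - apply Rmult_lt_0_compat; [pose proof (pos_INR n); lra | exact IH].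
Qed.

Lemma half_minus_INR_S_neq0 n : / 2 - INR (S n) <> 0.
Proof. rewrite S_INR; pose proof (pos_INR n); lra. Qed.

Lemma GammaH_neg_neq0 n : GammaH_neg n <> 0.
Proof.
  induction n as [|n IH]; simpl.
  - pose proof (sqrt_lt_R0 PI PI_RGT_0); lra.
  - unfold Rdiv. apply Rmult_integral_contrapositive; split; [exact IH|].
    apply Rinv_neq_0_compat, half_minus_INR_S_neq0.
Qed.

Lemma GammaH_neq0 j : GammaH j <> 0.
Proof.
  unfold GammaH. destruct (0 <=? j)%Z.
  - pose proof (GammaH_pos_gt0 (Z.to_nat j)); lra.
  - apply GammaH_neg_neq0.
Qed.

Lemma GammaH_opp n : GammaH (- Z.of_nat n) = GammaH_neg n.
Proof.
  unfold GammaH. destruct n as [|n]; [reflexivity|].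
  replace (0 <=? - Z.of_nat (S n))%Z with false by (symmetry; apply Z.leb_gt; lia).
  f_equal; lia.
Qed.

Lemma GammaH_succ j : GammaH (j + 1) = (IZR j + / 2) * GammaH j.
Proof.
  destruct (Z_le_gt_dec 0 j) as [Hj|Hj].
  - destruct (Z_of_nat_complete j Hj) as [n ->].
    unfold GammaH.
    replace (0 <=? Z.of_nat n + 1)%Z with true by (symmetry; apply Z.leb_le; lia).
    replace (0 <=? Z.of_nat n)%Z with true by (symmetry; apply Z.leb_le; lia).
    replace (Z.to_nat (Z.of_nat n + 1)) with (S n) by lia.
    rewrite Nat2Z.id, <- INR_IZR_INZ. reflexivity.
  - assert (exists n, j = - Z.of_nat (S n))%Z as [n ->]
      by (exists (Z.to_nat (- j) - 1)%nat; lia).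
    replace (- Z.of_nat (S n) + 1)%Z with (- Z.of_nat n)%Z by lia.
    rewrite !GammaH_opp, opp_IZR, <- INR_IZR_INZ.
    change (GammaH_neg (S n)) with (GammaH_neg n / (/ 2 - INR (S n))).
    field. rewrite S_INR; pose proof (pos_INR n); lra.
Qed.

Definition Jtil_coef (q : Z) (k : nat) : R :=
  (-1) ^ k / (Rpower 2 (2 * INR k + IZR q - / 2) * INR (fact k) * GammaH (Z.of_nat k + q)).

Lemma Jtil_PSeries q t : Jtil q t = PSeries (Jtil_coef q) (t ^ 2).
Proof.
  unfold Jtil, PSeries. apply Series_ext. intro k.
  unfold Jtil_coef. rewrite pow_mult. unfold Rdiv. ring.
Qed.

Lemma Rpower2_neq0 x : Rpower 2 x <> 0.
Proof. unfold Rpower. pose proof (exp_pos (x * ln 2)); lra. Qed.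

Lemma Rpower2_add1 x : Rpower 2 (1 + x) = 2 * Rpower 2 x.
Proof. rewrite Rpower_plus, Rpower_1 by lra. reflexivity. Qed.

Lemma Jtil_coef_neq0 q k : Jtil_coef q k <> 0.
Proof.
  unfold Jtil_coef, Rdiv. apply Rmult_integral_contrapositive; split.
  - apply pow_nonzero; lra.
  - apply Rinv_neq_0_compat.
    pose proof (Rpower2_neq0 (2 * INR k + IZR q - / 2)).
    pose proof (INR_fact_neq_0 k). pose proof (GammaH_neq0 (Z.of_nat k + q)).
    apply Rmult_integral_contrapositive; split; [apply Rmult_integral_contrapositive; split|]; assumption.
Qed.

(* [k + q + 1/2] never vanishes: it is a half-integer. *)
Lemma Jtil_coef_ratio q k :
  Jtil_coef q (S k) / Jtil_coef q k = - / (4 * INR (S k) * (INR k + IZR q + / 2)).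
Proof.
  unfold Jtil_coef.
  replace (2 * INR (S k) + IZR q - / 2) with (1 + (1 + (2 * INR k + IZR q - / 2)))
    by (rewrite S_INR; ring).
  rewrite !Rpower2_add1.
  replace (Z.of_nat (S k) + q)%Z with ((Z.of_nat k + q) + 1)%Z by lia.
  rewrite GammaH_succ, plus_IZR, <- INR_IZR_INZ.
  assert (Hhalf : INR k + IZR q + / 2 <> 0).
  { intro E. rewrite INR_IZR_INZ, <- plus_IZR in E.
    assert (E2 : 2 * IZR (Z.of_nat k + q) + 1 = 0) by lra.
    rewrite <- (mult_IZR 2), <- plus_IZR in E2. apply eq_IZR in E2. lia. }
  pose proof (Rpower2_neq0 (2 * INR k + IZR q - / 2)).
  pose proof (GammaH_neq0 (Z.of_nat k + q)).
  pose proof (INR_fact_neq_0 k).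
  pose proof (pow_nonzero (-1) k ltac:(lra)).
  rewrite fact_simpl, mult_INR. simpl pow. rewrite S_INR in *. pose proof (pos_INR k).
  field. repeat split; auto; lra.
Qed.

Lemma is_lim_seq_INR_plus c : is_lim_seq (fun n => INR n + c) p_infty.
Proof.
  eapply is_lim_seq_plus; [apply is_lim_seq_INR | apply is_lim_seq_const | easy].
Qed.

Lemma CV_radius_Jtil_coef q : CV_radius (Jtil_coef q) = p_infty.
Proof.
  apply CV_radius_infinite_DAlembert; [apply Jtil_coef_neq0|].
  apply is_lim_seq_ext with
    (fun n => Rabs (- / ((4 * (INR n + 1)) * (INR n + (IZR q + / 2))))).
  { intros n. rewrite Jtil_coef_ratio, S_INR. do 3 f_equal. ring. }
  replace (Finite 0) with (Rbar_abs (Finite 0)) by (simpl; rewrite Rabs_R0; auto).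
  apply is_lim_seq_abs.
  replace (Finite 0) with (Rbar_opp 0) by (simpl; f_equal; ring).
  apply -> is_lim_seq_opp.
  replace (Finite 0) with (Rbar_inv p_infty) by reflexivity.
  apply is_lim_seq_inv; [|easy].
  eapply is_lim_seq_mult; [| apply is_lim_seq_INR_plus |].
  - eapply is_lim_seq_mult; [apply is_lim_seq_const | apply is_lim_seq_INR_plus |].
    unfold is_Rbar_mult, Rbar_mult'. simpl.
    destruct (Rle_dec 0 4) as [H4|]; [|lra].
    destruct (Rle_lt_or_eq_dec 0 4 H4); [reflexivity | lra].
  - reflexivity.
Qed.

Lemma PS_derive_Jtil_coef q n :
  PS_derive (Jtil_coef q) n = PS_scal (- / 2) (Jtil_coef (q + 1)) n.
Proof.
  unfold PS_derive, PS_scal. change (scal (- / 2) (Jtil_coef (q + 1) n))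
    with (- / 2 * Jtil_coef (q + 1) n).
  unfold Jtil_coef.
  replace (2 * INR (S n) + IZR q - / 2) with (1 + (2 * INR n + IZR (q + 1) - / 2))
    by (rewrite S_INR, plus_IZR; ring).
  rewrite Rpower2_add1.
  replace (Z.of_nat (S n) + q)%Z with (Z.of_nat n + (q + 1))%Z by lia.
  pose proof (Rpower2_neq0 (2 * INR n + IZR (q + 1) - / 2)).
  pose proof (GammaH_neq0 (Z.of_nat n + (q + 1))).
  pose proof (INR_fact_neq_0 n).
  rewrite fact_simpl, mult_INR. simpl pow. rewrite S_INR. pose proof (pos_INR n).
  field. repeat split; auto; lra.
Qed.

(* The Bessel recurrence (t^-a J_a)' = - t^-a J_(a+1), read on power series in t^2. *)
Lemma is_derive_Jtil q t : is_derive (Jtil q) t (- t * Jtil (q + 1) t).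
Proof.
  apply is_derive_ext with (fun t => PSeries (Jtil_coef q) (t ^ 2)).
  { intro; symmetry; apply Jtil_PSeries. }
  replace (- t * Jtil (q + 1) t) with (scal (2 * t) (PSeries (PS_derive (Jtil_coef q)) (t ^ 2))).
  - apply (is_derive_comp (PSeries (Jtil_coef q)) (fun t => t ^ 2)).
    + apply is_derive_PSeries. rewrite CV_radius_Jtil_coef. easy.
    + auto_derive; auto; ring.
  - rewrite (PSeries_ext _ _ _ (PS_derive_Jtil_coef q)), PSeries_scal, <- Jtil_PSeries.
    unfold scal; simpl; unfold mult; simpl. field.
Qed.

Lemma fold_right_Rplus_acc l x : fold_right Rplus x l = fold_right Rplus 0 l + x.
Proof. induction l as [|a l IH]; simpl; [ring | rewrite IH; ring]. Qed.

Lemma sumR_succ N f : sumR (S N) f = sumR N f + f N.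
Proof.
  unfold sumR. rewrite seq_S, map_app, fold_right_app. simpl.
  rewrite fold_right_Rplus_acc. ring.
Qed.

Lemma sumR_succ_l N f : sumR (S N) f = f 0%nat + sumR N (fun l => f (S l)).
Proof. unfold sumR. simpl. f_equal. rewrite <- seq_shift, map_map. reflexivity. Qed.

Lemma sumR_ext N f g : (forall l, (l < N)%nat -> f l = g l) -> sumR N f = sumR N g.
Proof.
  induction N as [|N IH]; intros H; [reflexivity|].
  rewrite !sumR_succ, IH by (intros; apply H; lia). rewrite H by lia. reflexivity.
Qed.

Lemma sumR_add N f g : sumR N (fun l => f l + g l) = sumR N f + sumR N g.
Proof.
  induction N as [|N IH]; [unfold sumR; simpl; ring|].
  rewrite !sumR_succ, IH. ring.
Qed.

Lemma sumR_scal_l N c f : sumR N (fun l => c * f l) = c * sumR N f.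
Proof.
  induction N as [|N IH]; [unfold sumR; simpl; ring|].
  rewrite !sumR_succ, IH. ring.
Qed.

Lemma sumR_trunc N M f :
  (N <= M)%nat -> (forall l, (N <= l < M)%nat -> f l = 0) -> sumR M f = sumR N f.
Proof.
  intros HNM. induction M as [|M IH]; intros H.
  - replace N with 0%nat by lia. reflexivity.
  - destruct (Nat.eq_dec N (S M)) as [->|ne]; [reflexivity|].
    rewrite sumR_succ, IH by (try lia; intros; apply H; lia). rewrite H by lia. ring.
Qed.

Lemma is_derive_sumR N (f : nat -> R -> R) (d : nat -> R) w :
  (forall l, (l < N)%nat -> is_derive (f l) w (d l)) ->
  is_derive (fun x => sumR N (fun l => f l x)) w (sumR N d).
Proof.
  induction N as [|N IH]; intros H.
  - unfold sumR; simpl. auto_derive; auto.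
  - rewrite sumR_succ.
    apply is_derive_ext with (fun x => sumR N (fun l => f l x) + f N x).
    { intro; symmetry; apply sumR_succ. }
    apply (is_derive_plus (fun x => sumR N (fun l => f l x)) (f N)).
    + apply IH; intros; apply H; lia.
    + apply H; lia.
Qed.

(* The number of ways to choose [l] disjoint pairs among [j] points. *)
Definition pairings (j l : nat) : R :=
  if (2 * l <=? j)%nat
  then / (2 ^ l * INR (fact l)) * (INR (fact j) / INR (fact (j - 2 * l)))
  else 0.

Lemma pairings_in j l : (2 * l <= j)%nat ->
  pairings j l = / (2 ^ l * INR (fact l)) * (INR (fact j) / INR (fact (j - 2 * l))).
Proof. intro H. unfold pairings. apply Nat.leb_le in H. rewrite H. reflexivity. Qed.

Lemma pairings_out j l : (j < 2 * l)%nat -> pairings j l = 0.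
Proof. intro H. unfold pairings. apply Nat.leb_gt in H. rewrite H. reflexivity. Qed.

Lemma pairings_0 j : pairings j 0 = 1.
Proof.
  rewrite pairings_in by lia. rewrite Nat.sub_0_r. simpl.
  pose proof (INR_fact_neq_0 j). field. auto.
Qed.

(* The new point is either unpaired, or paired with one of the [j - 2l] points
   left free by [l] pairs. *)
Lemma pairings_succ j l :
  pairings (S j) (S l) = INR (j - 2 * l) * pairings j l + pairings j (S l).
Proof.
  destruct (le_lt_dec j (2 * l)) as [Hle|Hlt].
  - rewrite !(pairings_out _ (S l)) by lia.
    replace (j - 2 * l)%nat with 0%nat by lia. simpl. ring.
  - pose proof (INR_fact_neq_0 l). pose proof (pow_lt 2 l ltac:(lra)).
    pose proof (pos_INR l).
    rewrite !(pairings_in _ l), (pairings_in (S j)) by lia.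
    rewrite fact_simpl, !mult_INR. simpl pow.
    destruct (Nat.eq_dec j (2 * l + 1)) as [->|Hne].
    + rewrite (pairings_out _ (S l)) by lia.
      replace (S (2 * l + 1) - 2 * S l)%nat with 0%nat by lia.
      replace (2 * l + 1 - 2 * l)%nat with 1%nat by lia.
      rewrite fact_simpl, !mult_INR, !S_INR, plus_INR, mult_INR. simpl.
      field. lra.
    + assert (exists r, j = 2 * l + 2 + r)%nat as [r ->] by (exists (j - (2 * l + 2))%nat; lia).
      rewrite pairings_in by lia.
      replace (S (2 * l + 2 + r) - 2 * S l)%nat with (S r) by lia.
      replace (2 * l + 2 + r - 2 * l)%nat with (S (S r)) by lia.
      replace (2 * l + 2 + r - 2 * S l)%nat with r by lia.
      rewrite fact_simpl, !mult_INR, !fact_simpl, !mult_INR, !S_INR, !plus_INR, !mult_INR.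
      pose proof (INR_fact_neq_0 r). pose proof (pos_INR r). simpl.
      field. repeat split; auto; lra.
Qed.

Lemma pairings_monomial_succ j l s :
  pairings (S j) (S l) * s ^ (S j - 2 * S l) =
  pairings j l * INR (j - 2 * l) * s ^ pred (j - 2 * l)
  + pairings j (S l) * s ^ S (j - 2 * S l).
Proof.
  rewrite pairings_succ.
  destruct (le_lt_dec (2 * l + 2) j).
  - replace (pred (j - 2 * l)) with (S j - 2 * S l)%nat by lia.
    replace (S (j - 2 * S l)) with (S j - 2 * S l)%nat by lia. ring.
  - rewrite (pairings_out j (S l)) by lia.
    destruct (Nat.eq_dec j (2 * l + 1)) as [->|].
    + replace (S (2 * l + 1) - 2 * S l)%nat with (pred (2 * l + 1 - 2 * l)) by lia. ring.
    + replace (j - 2 * l)%nat with 0%nat by lia. simpl. ring.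
Qed.

Definition bessel_sum (n j : nat) (s t : R) : R :=
  sumR (S j) (fun l => pairings j l * s ^ (j - 2 * l) * Jtil (qA n l) t).

Lemma bessel_sum_succ j s (K : nat -> R) :
  sumR (S (S j)) (fun l => pairings (S j) l * s ^ (S j - 2 * l) * K l) =
  sumR (S j) (fun l => pairings j l * INR (j - 2 * l) * s ^ pred (j - 2 * l) * K (S l)
                       + pairings j l * s ^ S (j - 2 * l) * K l).
Proof.
  rewrite sumR_succ_l, sumR_add,
    (sumR_succ_l j (fun l => pairings j l * s ^ S (j - 2 * l) * K l)).
  rewrite <- (sumR_trunc j (S j) (fun l => pairings j (S l) * s ^ S (j - 2 * S l) * K (S l)));
    [| lia | intros l Hl; rewrite pairings_out by lia; ring].
  rewrite (sumR_ext _ _ (fun l => pairings j l * INR (j - 2 * l) * s ^ pred (j - 2 * l) * K (S l)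
                       + pairings j (S l) * s ^ S (j - 2 * S l) * K (S l)))
    by (intros l _; rewrite pairings_monomial_succ; ring).
  rewrite sumR_add, !pairings_0, !Nat.sub_0_r. ring.
Qed.

Lemma is_derive_polar_monomial_Jtil z w a q : -1 < w < 1 ->
  is_derive (fun w' => (z * w') ^ a * Jtil q (z * sqrt (1 - w' ^ 2))) w
    (z * (INR a * (z * w) ^ pred a * Jtil q (z * sqrt (1 - w ^ 2))
          + (z * w) ^ S a * Jtil (q + 1) (z * sqrt (1 - w ^ 2)))).
Proof.
  intros Hw.
  assert (Hp : 0 < 1 - w ^ 2) by nra.
  pose proof (sqrt_lt_R0 _ Hp).
  assert (Ht : is_derive (fun w' => z * sqrt (1 - w' ^ 2)) w (z * (- w / sqrt (1 - w ^ 2)))).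
  { auto_derive; [lra|]. replace (1 + - (w * (w * 1))) with (1 - w ^ 2) by ring. field. lra. }
  assert (Hs : is_derive (fun w' => (z * w') ^ a) w (INR a * z * (z * w) ^ pred a)).
  { apply is_derive_pow. auto_derive; auto; ring. }
  pose proof (is_derive_comp (Jtil q) _ w _ _ (is_derive_Jtil q _) Ht) as HJ.
  pose proof (is_derive_mult _ _ w _ _ Hs HJ ltac:(intros; apply Rmult_comm)) as HsJ.
  match type of HsJ with is_derive _ _ ?D => replace (z * _) with D end; [exact HsJ|].
  unfold plus, mult, scal; simpl; unfold mult, plus; simpl.
  replace (w * (w * 1)) with (w ^ 2) by ring. field. lra.
Qed.

Lemma div2_add2 n : Nat.div2 (n + 2) = S (Nat.div2 n).
Proof. rewrite Nat.add_comm. reflexivity. Qed.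

Lemma qA_succ n l : (qA n l + 1)%Z = qA (n + 2) l.
Proof. unfold qA. rewrite div2_add2. lia. Qed.

Lemma qA_add2 n l : qA n l = qA (n + 2) (S l).
Proof. unfold qA. rewrite div2_add2. lia. Qed.

Lemma is_derive_polar_bessel_sum n j z w : -1 < w < 1 ->
  is_derive (fun w' => polar (bessel_sum n j) z w') w (z * polar (bessel_sum (n + 2) (S j)) z w).
Proof.
  intros Hw. unfold polar, bessel_sum.
  apply is_derive_ext with (fun w' => sumR (S j) (fun l =>
    pairings j l * ((z * w') ^ (j - 2 * l) * Jtil (qA n l) (z * sqrt (1 - w' ^ 2))))).
  { intro; apply sumR_ext; intros; ring. }
  rewrite bessel_sum_succ, <- sumR_scal_l.
  apply is_derive_sumR. intros l _.
  cbv beta. rewrite <- (qA_add2 n l), <- (qA_succ n l).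
  match goal with |- is_derive _ _ ?D => replace D with
    (pairings j l * (z * (INR (j - 2 * l) * (z * w) ^ pred (j - 2 * l)
        * Jtil (qA n l) (z * sqrt (1 - w ^ 2))
      + (z * w) ^ S (j - 2 * l) * Jtil (qA n l + 1) (z * sqrt (1 - w ^ 2))))) by ring end.
  apply is_derive_scal, is_derive_polar_monomial_Jtil, Hw.
Qed.

Lemma zDw_scal_bessel_sum F c n j z w : z <> 0 -> -1 < w < 1 ->
  (forall w', polar F z w' = c * polar (bessel_sum n j) z w') ->
  ex_derive (fun w' => polar F z w') w /\
  zDw F z w = c * polar (bessel_sum (n + 2) (S j)) z w.
Proof.
  intros Hz Hw HF.
  assert (D : is_derive (fun w' => polar F z w') w
                (c * (z * polar (bessel_sum (n + 2) (S j)) z w))).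
  { apply is_derive_ext with (fun w' => c * polar (bessel_sum n j) z w').
    - intro; symmetry; apply HF.
    - apply is_derive_scal, is_derive_polar_bessel_sum, Hw. }
  split; [eexists; exact D|].
  unfold zDw. replace (Derive _ w) with (c * (z * polar (bessel_sum (n + 2) (S j)) z w))
    by (symmetry; exact (is_derive_unique _ _ _ D)).
  field. exact Hz.
Qed.

Lemma div2_bounds i : (2 * Nat.div2 i <= i <= 2 * Nat.div2 i + 1)%nat.
Proof. pose proof (Nat.div2_odd i). destruct (Nat.odd i); simpl in *; lia. Qed.

Lemma sumR_div2_trunc i (F : nat -> R) :
  (forall l, (i < 2 * l)%nat -> F l = 0) -> sumR (S i) F = sumR (S (Nat.div2 i)) F.
Proof.
  pose proof (div2_bounds i). intros HF.
  apply sumR_trunc; [lia|]. intros l Hl. apply HF. lia.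
Qed.

Lemma fhat_bessel_sum n i s t :
  fhat n i s t = (-1) ^ (Nat.div2 n + i) * sqrt (PI / 2) * bessel_sum n i s t.
Proof.
  unfold fhat, bessel_sum. f_equal.
  rewrite (sumR_div2_trunc i) by (intros l Hl; rewrite pairings_out by lia; ring).
  apply sumR_ext. intros l Hl. pose proof (div2_bounds i).
  rewrite pairings_in by lia. ring.
Qed.

Lemma ftil_bessel_sum n j s t :
  ftil n (S j) s t = - sqrt (PI / 2) * INR (S j) * bessel_sum n j s t.
Proof.
  unfold ftil, bessel_sum.
  replace (Nat.div2 (S j + 1)) with (S (Nat.div2 j))
    by (rewrite <- div2_add2; f_equal; lia).
  rewrite Rmult_assoc. f_equal.
  rewrite <- sumR_scal_l, (sumR_div2_trunc j)
    by (intros l Hl; rewrite pairings_out by lia; ring).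
  apply sumR_ext. intros l Hl. pose proof (div2_bounds j).
  rewrite pairings_in by lia.
  replace (S j - 1 - 2 * l)%nat with (j - 2 * l)%nat by lia.
  rewrite fact_simpl, mult_INR. unfold Rdiv. ring.
Qed.

Lemma gfun_bessel_sum n i s t : gfun n i s t = sqrt (PI / 2) * bessel_sum (n + 2) i s t.
Proof.
  unfold gfun, bessel_sum. f_equal.
  rewrite (sumR_div2_trunc i) by (intros l Hl; rewrite pairings_out by lia; ring).
  apply sumR_ext. intros l Hl. pose proof (div2_bounds i).
  rewrite pairings_in by lia.
  replace (qB n l) with (qA (n + 2) l) by (unfold qA, qB; rewrite div2_add2; lia). ring.
Qed.

Lemma polar_fhat n i z w :
  polar (fhat n i) z w = (-1) ^ (Nat.div2 n + i) * sqrt (PI / 2) * polar (bessel_sum n i) z w.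
Proof. apply fhat_bessel_sum. Qed.

Lemma polar_ftil n j z w :
  polar (ftil n (S j)) z w = - sqrt (PI / 2) * INR (S j) * polar (bessel_sum n j) z w.
Proof. apply ftil_bessel_sum. Qed.

Lemma polar_gfun n i z w : polar (gfun n i) z w = sqrt (PI / 2) * polar (bessel_sum (n + 2) i) z w.
Proof. apply gfun_bessel_sum. Qed.

Lemma fhat_sign_add2 n i : (-1) ^ (Nat.div2 (n + 2) + S i) = (-1) ^ (Nat.div2 n + i).
Proof.
  rewrite div2_add2. replace (S (Nat.div2 n) + S i)%nat with (Nat.div2 n + i + 2)%nat by lia.
  rewrite pow_add. simpl. ring.
Qed.

Lemma ftil_1_fhat_1 m s t : (2 <= m)%nat -> s <> 0 ->
  ftil (m + 2) 1 s t = (-1) ^ (Nat.div2 m - 1) * / s * fhat (m + 2) 1 s t.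
Proof.
  intros Hm Hs. rewrite ftil_bessel_sum, fhat_bessel_sum, div2_add2.
  replace (S (Nat.div2 m) + 1)%nat with (Nat.div2 m - 1 + 1 + 2)%nat
    by (pose proof (div2_bounds m); lia).
  rewrite !pow_add. simpl pow.
  assert (Hsq : ((-1) ^ (Nat.div2 m - 1)) ^ 2 = 1)
    by (rewrite <- pow_mult, Nat.mul_comm, pow_mult; replace ((-1) ^ 2) with 1 by ring;
        apply pow1).
  unfold bessel_sum. rewrite !sumR_succ_l. unfold sumR; simpl.
  rewrite !pairings_0, (pairings_out 1 1) by lia.
  field_simplify; [| exact Hs].
  rewrite Hsq. ring.
Qed.

Theorem proposition4p1 (m : nat) (Hm_even : Nat.Even m) (Hm2 : (2 <= m)%nat) :
  (forall i : nat, (1 <= i <= m - 2)%nat ->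
   forall z w : R, 0 < z -> -1 < w < 1 ->
     ex_derive (fun w' => polar (ftil m i) z w') w /\
     ex_derive (fun w' => polar (fhat m i) z w') w /\
     ex_derive (fun w' => polar (ftil (m + 2) (i + 1)) z w') w /\
     polar (ftil (m + 2) (i + 1)) z w = (INR (i + 1) / INR i) * zDw (ftil m i) z w /\
     polar (fhat (m + 2) (i + 1)) z w = zDw (fhat m i) z w /\
     polar (gfun (m + 2) (i + 1)) z w = - / INR (i + 1) * zDw (ftil (m + 2) (i + 1)) z w)
  /\
  (forall z w : R, 0 < z -> -1 < w < 1 ->
     ex_derive (fun w' => polar (fhat m 0) z w') w /\
     ex_derive (fun w' => polar (ftil (m + 2) 1) z w') w /\
     polar (fhat (m + 2) 1) z w = zDw (fhat m 0) z w /\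
     polar (gfun (m + 2) 1) z w = - zDw (ftil (m + 2) 1) z w)
  /\
  (forall s t : R, s <> 0 ->
     ftil (m + 2) 1 s t = (-1) ^ (Nat.div2 m - 1) * / s * fhat (m + 2) 1 s t).
Proof.
  split; [|split]; [| | intros s t Hs; exact (ftil_1_fhat_1 m s t Hm2 Hs)].
  - intros [|j] Hi z w Hz Hw; [lia|]. replace (S j + 1)%nat with (S (S j)) by lia.
    assert (Hz0 : z <> 0) by lra.
    destruct (zDw_scal_bessel_sum _ _ m j z w Hz0 Hw (polar_ftil m j z)) as [D1 E1].
    destruct (zDw_scal_bessel_sum _ _ m (S j) z w Hz0 Hw (polar_fhat m (S j) z)) as [D2 E2].
    destruct (zDw_scal_bessel_sum _ _ (m + 2) (S j) z w Hz0 Hw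
                (polar_ftil (m + 2) (S j) z)) as [D3 E3].
    pose proof (pos_INR j).
    repeat split; auto.
    + rewrite E1, polar_ftil, !S_INR. field. lra.
    + rewrite E2, polar_fhat, fhat_sign_add2. reflexivity.
    + rewrite E3, polar_gfun, !S_INR. field. lra.
  - intros z w Hz Hw. assert (Hz0 : z <> 0) by lra.
    destruct (zDw_scal_bessel_sum _ _ m 0 z w Hz0 Hw (polar_fhat m 0 z)) as [D2 E2].
    destruct (zDw_scal_bessel_sum _ _ (m + 2) 0 z w Hz0 Hw (polar_ftil (m + 2) 0 z)) as [D3 E3].
    repeat split; auto.
    + rewrite E2, polar_fhat, fhat_sign_add2. reflexivity.
    + rewrite E3, polar_gfun. simpl INR. ring.
Qed.
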